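(* Let $G$ be a nonempty $L^0$-convex subset of $L^0$ (with the topology of convergence in probability). If $G$ is $L^0$-convexly compact, then $G$ is almost surely bounded (there is $\xi\in L^0_+$ with $|g|\le\xi$ for all $g\in G$) and closed.
   Context: $(\Omega,\mathcal{F},P)$ is a probability space; $L^0$ denotes the set of equivalence classes (modulo $P$-a.s. equality) of real-valued $\mathcal{F}$-measurable random variables, endowed with the topology of convergence in probability and the a.s. partial order; $L^0_+=\{\xi\in L^0:\xi\ge0\}$. A subset $G\subset L^0$ is $L^0$-convex if $\xi x+(1-\xi)y\in G$ for all $x,y\in G$ and all $\xi\in L^0$ with $0\le\xi\le1$. An $L^0$-convex set $G$ is $L^0$-convexly compact if every family of $L^0$-convex subsets of $G$ which are closed (in the relative topology of $G$) and which has the finite intersection property has nonempty intersection. *)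

From HB Require Import structures.
From mathcomp Require Import all_boot all_order all_algebra.
From mathcomp Require Import all_classical all_reals all_analysis.
Set Implicit Arguments. Unset Strict Implicit. Unset Printing Implicit Defensive.
Import Order.TTheory GRing.Theory Num.Theory.
Local Open Scope classical_set_scope.
Local Open Scope ring_scope.

(* L^0 over a probability space (T, F, P), represented by measurable
   representatives; subsets of L^0 (sets of equivalence classes) are
   represented by "saturated" sets of measurable functions, i.e. sets closed
   under P-a.s. equality. *)
Section L0.
Context {d : measure_display} {T : measurableType d} {R : realType}
  (P : probability T R).

Definition L0 (f : T -> R) : Prop := measurable_fun setT f.

Definition L0set (A : set (T -> R)) : Prop :=
  A `<=` L0 /\
  forall f g, A f -> L0 g -> {ae P, forall x, f x = g x} -> A g.

Definition L0convex (A : set (T -> R)) : Prop :=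
  forall f g xi, A f -> A g -> L0 xi ->
    {ae P, forall x, 0 <= xi x <= 1} ->
    A (fun x => xi x * f x + (1 - xi x) * g x).

Definition prob_open (U : set (T -> R)) : Prop :=
  U `<=` L0 /\
  forall f, U f -> exists2 eps : R, 0 < eps &
    forall g, L0 g -> (P [set x | (eps < `|g x - f x|)%R] < eps%:E)%E -> U g.

Definition prob_closed (C : set (T -> R)) : Prop :=
  C `<=` L0 /\ prob_open (L0 `\` C).

Definition rel_closed (G F : set (T -> R)) : Prop :=
  exists2 C, prob_closed C & F = G `&` C.

Definition fin_inter_prop (Fam : set (set (T -> R))) : Prop :=
  forall (n : nat) (h : 'I_n -> set (T -> R)),
    (forall i, Fam (h i)) -> exists f, forall i, h i f.

Definition L0convexly_compact (G : set (T -> R)) : Prop :=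
  forall Fam : set (set (T -> R)),
    (forall F, Fam F -> [/\ L0set F, F `<=` G, L0convex F & rel_closed G F]) ->
    fin_inter_prop Fam ->
    exists f, forall F, Fam F -> F f.

End L0.

From HB Require Import structures.
From mathcomp Require Import all_boot all_order all_algebra.
From mathcomp Require Import all_classical all_reals all_analysis.
From mathcomp Require Import measurable_realfun ring lra.
Import Order.TTheory GRing.Theory Num.Theory.
Local Open Scope classical_set_scope.
Local Open Scope ring_scope.

(* Let s act on L^0 pointwise, 1-Lipschitz and quasi-convex (s h = h, -h or
   |h - f|).  The sets {h in G | s h <= s g a.s.}, g in G, are relatively
   closed and L^0-convex, and they have the finite intersection property
   because G is stable under gluing along measurable sets (convex combinations
   with indicator weights).  L^0-convex compactness thus yields an element of G
   essentially minimising s.  For s h = h and s h = -h this bounds G from below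
   and above; for s h = |h - f| with f in the closure of G the minimiser is
   a.s. equal to f, so f is in G. *)

Section measure_lemmas.
Context {d : measure_display} {T : measurableType d} {R : realType}.
Context {mu : {measure set T -> \bar R}}.

Lemma measurable_ltr (f g : T -> R) : L0 f -> L0 g ->
  measurable [set x | f x < g x].
Proof.
move=> mf mg; rewrite -[X in measurable X]setTI.
have -> : [set x | f x < g x] = (fun x => f x < g x) @^-1` [set true] by [].
exact: measurable_fun_ltr.
Qed.

Lemma le_measure_ae {A B : set T} {Q : T -> Prop} :
  measurable A -> measurable B -> {ae mu, forall x, Q x} ->
  (forall x, A x -> Q x -> B x) -> (mu A <= mu B)%E.
Proof.
move=> mA mB [N [mN N0 notQN]] AQB.
rewrite -(measureU0 mB mN N0); apply: le_measure; rewrite ?inE //.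
  exact: measurableU.
move=> x Ax; have [Qx|nQx] := pselect (Q x); first by left; exact: AQB.
by right; exact: notQN.
Qed.

Lemma ae_le0_of_tails {u : T -> R} : L0 u ->
  (forall e, 0 < e -> mu [set x | e < u x] = 0%E) ->
  {ae mu, forall x, u x <= 0}.
Proof.
move=> Lu tails.
apply: (@negligibleS _ _ _ _ (\bigcup_k [set x | k.+1%:R^-1 < u x])).
  move=> x /= /negP; rewrite -ltNge => ux.
  by exists (Num.truncn (u x)^-1) => //=; rewrite invf_plt ?posrE // truncnS_gt.
apply: negligible_bigcup => k; apply/negligibleP.
  by apply: measurable_ltr => //; exact: measurable_cst.
by apply: tails; rewrite invr_gt0 ltr0n.
Qed.

Lemma measure_small_eq0 (A : set T) :
  (forall e, 0 < e -> (mu A <= e%:E)%E) -> mu A = 0%E.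
Proof.
move=> small; apply/eqP; rewrite -measure_le0; apply/lee_addgt0Pr => e e0.
by rewrite add0e; exact: small.
Qed.

Lemma ae_eq_of_closest (G : set (T -> R)) (f h : T -> R) :
  G `<=` L0 -> L0 f -> L0 h ->
  (forall e : R, 0 < e ->
    exists2 g, G g & (mu [set x | (e < `|g x - f x|)%R] < e%:E)%E) ->
  (forall g, G g -> {ae mu, forall x, `|h x - f x| <= `|g x - f x|}) ->
  {ae mu, forall x, h x = f x}.
Proof.
move=> GL0 Lf Lh approx closest.
have L0_dist g : L0 g -> L0 (fun x => `|g x - f x|).
  by move=> Lg; apply: measurableT_comp => //; exact: measurable_funB.
have dist_tails (delta : R) :
    0 < delta -> mu [set x | delta < `|h x - f x|] = 0%E.
  move=> delta0; apply: measure_small_eq0 => e e0.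
  have e'0 : 0 < Num.min e delta by rewrite lt_min e0.
  have [g Gg small] := approx _ e'0.
  have e'e : ((Num.min e delta)%:E <= e%:E)%E by rewrite lee_fin ge_min lexx.
  apply: le_trans (ltW (lt_le_trans small e'e)).
  apply: (le_measure_ae _ _ (closest g Gg)).
  - by apply: measurable_ltr; [exact: measurable_cst | exact: L0_dist].
  - by apply: measurable_ltr; [exact: measurable_cst | exact/L0_dist/GL0].
  - move=> x /= hx hg; apply: lt_le_trans hg.
    by apply: le_lt_trans hx; rewrite ge_min lexx orbT.
move: (ae_le0_of_tails (L0_dist _ Lh) dist_tails); apply: filterS => x.
by rewrite normr_le0 subr_eq0 => /eqP.
Qed.

End measure_lemmas.

Section L0set_lemmas.
Context {d : measure_display} {T : measurableType d} {R : realType}.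
Context {P : probability T R}.

Lemma L0setI (A B : set (T -> R)) :
  L0set P A -> L0set P B -> L0set P (A `&` B).
Proof.
move=> [AL0 Asat] [_ Bsat]; split=> [f [/AL0] //|f g [Af Bf] Lg fg].
by split; [exact: Asat Af Lg fg | exact: Bsat Bf Lg fg].
Qed.

Lemma L0convexI (A B : set (T -> R)) :
  L0convex P A -> L0convex P B -> L0convex P (A `&` B).
Proof.
by move=> cA cB f g xi [Af Bf] [Ag Bg] Lxi xi01; split; [exact: cA | exact: cB].
Qed.

End L0set_lemmas.

Section essential_minimiser.
Context {d : measure_display} {T : measurableType d} {R : realType}.
Variable P : probability T R.
Variable s : (T -> R) -> T -> R.
Hypothesis s_L0 : forall h, L0 h -> L0 (s h).
Hypothesis s_quasiconvex : forall h1 h2 (xi : T -> R) x, 0 <= xi x <= 1 ->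
  s (fun y => xi y * h1 y + (1 - xi y) * h2 y) x <= Num.max (s h1 x) (s h2 x).
Hypothesis s_lipschitz : forall h1 h2 x, `|s h1 x - s h2 x| <= `|h1 x - h2 x|.

Lemma s_local {h1 h2 : T -> R} {x : T} : h1 x = h2 x -> s h1 x = s h2 x.
Proof.
move=> e; have := s_lipschitz h1 h2 x.
by rewrite e subrr normr0 normr_le0 subr_eq0 => /eqP.
Qed.

Definition sublevel (u : T -> R) :=
  [set h | L0 h /\ {ae P, forall x, s h x <= u x}].

Lemma sublevel_L0set u : L0set P (sublevel u).
Proof.
split=> [h [] //|h h' [_ hu] Lh' hh']; split=> //.
by apply: filterS2 hh' hu => x e; rewrite -(s_local e).
Qed.

Lemma sublevel_L0convex u : L0convex P (sublevel u).
Proof.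
move=> h1 h2 xi [L1 u1] [L2 u2] Lxi xi01; split.
  apply: measurable_funD; apply: measurable_funM => //.
  by apply: measurable_funB => //; exact: measurable_cst.
apply: filterS3 xi01 u1 u2 => x xix l1 l2.
by apply: le_trans (s_quasiconvex _ _ _ _ xix) _; rewrite ge_max l1 l2.
Qed.

Lemma sublevel_closed u : L0 u -> prob_closed P (sublevel u).
Proof.
move=> Lu; split=> [h [] //|]; split=> [h [] //|h [Lh not_sub]].
have L0_excess : L0 (fun x => s h x - u x).
  by apply: measurable_funB => //; exact: s_L0.
have [delta delta0 tail_pos] : exists2 delta : R, 0 < delta &
    P [set x | delta < s h x - u x] <> 0%E.
  apply: contrapT => no_tail; apply: not_sub; split=> //.
  have : {ae P, forall x, s h x - u x <= 0}.
    apply: ae_le0_of_tails L0_excess _ => e e0.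
    by apply: contrapT => tail; apply: no_tail; exists e.
  by apply: filterS => x; rewrite subr_le0.
set B := [set x | _ < _] in tail_pos.
have mB : measurable B by apply: measurable_ltr => //; exact: measurable_cst.
pose r := fine (P B).
have PBr : P B = r%:E by rewrite fineK // fin_num_measure.
have r0 : 0 < r.
  rewrite lt_def -lee_fin -PBr measure_ge0 andbT.
  by apply/eqP => r0; apply: tail_pos; rewrite PBr r0.
(* on B, s g <= u forces g to stay delta away from h *)
exists (Num.min delta r) => [|g Lg small]; first by rewrite lt_min delta0 r0.
split=> // -[_ g_sub].
have : (P B <= P [set x | (Num.min delta r < `|g x - h x|)%R])%E.
  apply: (le_measure_ae (mu := P) mB _ g_sub) => [|x Bx gu].
    apply: measurable_ltr; first exact: measurable_cst.
    by apply: measurableT_comp => //; exact: measurable_funB.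
  rewrite /= gt_min distrC; apply/orP; left; move: Bx; rewrite /B /=.
  have := s_lipschitz h g x; have := ler_norm (s h x - s g x); lra.
rewrite PBr => /le_lt_trans/(_ small).
by rewrite lte_fin lt_min ltxx andbF.
Qed.

Variable G : set (T -> R).
Hypothesis G_L0set : L0set P G.
Hypothesis G_convex : L0convex P G.

Lemma downward_directed2 {g1 g2 : T -> R} : G g1 -> G g2 ->
  exists2 g, G g & forall x, s g x <= Num.min (s g1 x) (s g2 x).
Proof.
move=> Gg1 Gg2; pose A := [set x | s g2 x < s g1 x].
have mA : measurable A by apply: measurable_ltr; apply/s_L0/G_L0set.1.
pose xi := \1_A : T -> R.
exists (fun y => xi y * g2 y + (1 - xi y) * g1 y).
  apply: G_convex => //; first exact: measurable_indic.
  by apply: aeW => x; rewrite /xi indicE; case: (x \in A); rewrite ?lexx ?ler01.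
move=> x; case: (boolP (x \in A)) => xA.
- rewrite (s_local (h2 := g2)); last first.
    by rewrite /xi indicE xA mul1r subrr mul0r addr0.
  by rewrite le_min lexx andbT; exact/ltW/set_mem.
- rewrite (s_local (h2 := g1)); last first.
    by rewrite /xi indicE (negbTE xA) mul0r subr0 mul1r add0r.
  by rewrite le_min lexx leNgt; apply: contra xA => ?; exact: mem_set.
Qed.

Lemma downward_directed {n} (gs : 'I_n -> T -> R) : (exists g, G g) ->
  (forall i, G (gs i)) -> exists2 g, G g & forall i x, s g x <= s (gs i) x.
Proof.
move=> [g0 Gg0]; elim: n gs => [|n IH] gs Ggs; first by exists g0 => // -[].
have [g' Gg' le_g'] := IH (gs \o lift ord0) (fun i => Ggs _).
have [g Gg le_g] := downward_directed2 Gg' (Ggs ord0).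
exists g => // i x; have := le_g x; rewrite le_min => /andP[le1 le2].
by case: (unliftP ord0 i) => [j ->|->] //; exact: le_trans le1 (le_g' j x).
Qed.

Definition sublevel_family :=
  [set F | exists2 g, G g & F = G `&` sublevel (s g)].

Lemma sublevel_family_fip : (exists g, G g) -> fin_inter_prop sublevel_family.
Proof.
move=> G0 n F memF.
have /choice[gs gsP] : forall i, exists g, G g /\ F i = G `&` sublevel (s g).
  by move=> i; have [g Gg ->] := memF i; exists g.
have [g Gg le_g] := downward_directed gs G0 (fun i => (gsP i).1).
exists g => i; rewrite (gsP i).2; split=> //; split; first exact: G_L0set.1.
exact: aeW (le_g i).
Qed.

Theorem L0convexly_compact_ess_argmin : (exists g, G g) ->
  L0convexly_compact P G ->
  exists2 h, G h & forall g, G g -> {ae P, forall x, s h x <= s g x}.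
Proof.
move=> G0 cpt.
have [h hF] : exists h, forall F, sublevel_family F -> F h.
  apply: cpt (sublevel_family_fip G0) => _ [g Gg ->]; split.
  - exact: L0setI (sublevel_L0set _).
  - exact: subIsetl.
  - exact: L0convexI (sublevel_L0convex _).
  - by exists (sublevel (s g)) => //; exact/sublevel_closed/s_L0/G_L0set.1.
have [g0 Gg0] := G0.
exists h; first by have [] := hF _ (ex_intro2 _ _ g0 Gg0 erefl).
by move=> g Gg; have [_ []] := hF _ (ex_intro2 _ _ g Gg erefl).
Qed.

End essential_minimiser.

Section convex_combination.
Context {R : realDomainType}.

Lemma convex_comb_le_max (a b t : R) : 0 <= t <= 1 ->
  t * a + (1 - t) * b <= Num.max a b.
Proof.
move=> /andP[t0 t1].
have aM : a <= Num.max a b by rewrite le_max lexx.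
have bM : b <= Num.max a b by rewrite le_max lexx orbT.
move: (Num.max a b) aM bM => M aM bM; nra.
Qed.

Lemma dist_convex_comb_le_max (a b c t : R) :
  0 <= t <= 1 -> `|t * a + (1 - t) * b - c| <= Num.max `|a - c| `|b - c|.
Proof.
move=> t01; have /andP[t0 t1] := t01.
apply: (@le_trans _ _ (t * `|a - c| + (1 - t) * `|b - c|)); last first.
  exact: convex_comb_le_max.
have -> : t * a + (1 - t) * b - c = t * (a - c) + (1 - t) * (b - c) by ring.
apply: le_trans (ler_normD _ _) _.
by rewrite !normrM (ger0_norm t0) [`|1 - t|]ger0_norm ?subr_ge0.
Qed.

End convex_combination.

Section L0convexly_compact_set.
Context {d : measure_display} {T : measurableType d} {R : realType}.
Context {P : probability T R} {G : set (T -> R)}.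
Hypothesis G_L0set : L0set P G.
Hypothesis G_ne : exists g, G g.
Hypothesis G_convex : L0convex P G.
Hypothesis G_compact : L0convexly_compact P G.

Lemma L0convexly_compact_lower_bound :
  exists2 h, G h & forall g, G g -> {ae P, forall x, h x <= g x}.
Proof.
apply: (L0convexly_compact_ess_argmin P (fun h => h)) => // h1 h2 xi x.
exact: convex_comb_le_max.
Qed.

Lemma L0convexly_compact_upper_bound :
  exists2 h, G h & forall g, G g -> {ae P, forall x, g x <= h x}.
Proof.
have opp_quasiconvex (h1 h2 xi : T -> R) (x : T) : 0 <= xi x <= 1 ->
    - (xi x * h1 x + (1 - xi x) * h2 x) <= Num.max (- h1 x) (- h2 x).
  by rewrite opprD -!mulrN; exact: convex_comb_le_max.
have opp_lipschitz (h1 h2 : T -> R) (x : T) :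
    `|- h1 x - - h2 x| <= `|h1 x - h2 x|.
  by rewrite -opprD normrN.
have [h Gh le_h] := L0convexly_compact_ess_argmin P (fun h x => - h x)
  (fun h Lh => measurable_funN Lh) opp_quasiconvex opp_lipschitz
  G G_L0set G_convex G_ne G_compact.
by exists h => // g Gg; move: (le_h g Gg); apply: filterS => x; rewrite lerN2.
Qed.

Lemma L0convexly_compact_closed : prob_closed P G.
Proof.
split; first exact: G_L0set.1.
split=> [f [] //|f [Lf notGf]].
apply: contrapT => not_open.
have approx (e : R) : 0 < e ->
    exists2 g, G g & (P [set x | (e < `|g x - f x|)%R] < e%:E)%E.
  move=> e0; apply: contrapT => no_g; apply: not_open.
  exists e => // g Lg small.
  by split=> // Gg; apply: no_g; exists g.
have L0_dist (h : T -> R) : L0 h -> L0 (fun x => `|h x - f x|).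
  by move=> Lh; apply: measurableT_comp => //; exact: measurable_funB.
have dist_lipschitz (h1 h2 : T -> R) (x : T) :
    `| `|h1 x - f x| - `|h2 x - f x| | <= `|h1 x - h2 x|.
  by rewrite (le_trans (ler_dist_dist _ _)) // opprB addrA subrK.
have [h Gh closest] := L0convexly_compact_ess_argmin P _ L0_dist
  (fun _ _ _ _ => dist_convex_comb_le_max _ _ _ _) dist_lipschitz
  G G_L0set G_convex G_ne G_compact.
apply/notGf/(G_L0set.2 h f Gh Lf).
exact: ae_eq_of_closest G_L0set.1 Lf (G_L0set.1 _ Gh) approx closest.
Qed.

End L0convexly_compact_set.

Theorem proposition3p2 (d : measure_display) (T : measurableType d)
  (R : realType) (P : probability T R) (G : set (T -> R)) :
  L0set P G -> (exists g, G g) -> L0convex P G ->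
  L0convexly_compact P G ->
  (exists2 xi : T -> R, L0 xi /\ {ae P, forall x, 0 <= xi x} &
     forall g, G g -> {ae P, forall x, `|g x| <= xi x})
  /\ prob_closed P G.
Proof.
move=> G_L0set G_ne G_convex G_compact.
split; last exact: L0convexly_compact_closed.
have [lo Glo lo_le] :=
  L0convexly_compact_lower_bound G_L0set G_ne G_convex G_compact.
have [up Gup le_up] :=
  L0convexly_compact_upper_bound G_L0set G_ne G_convex G_compact.
exists (fun x => `|lo x| + `|up x|).
  split; last by apply: aeW => x; rewrite addr_ge0.
  by apply: measurable_funD; apply: measurableT_comp => //; exact: G_L0set.1.
move=> g Gg; apply: filterS2 (lo_le g Gg) (le_up g Gg) => x lo_g g_up.
have := ler_norm (up x); have := ler_norm (- lo x); rewrite normrN.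
have := normr_ge0 (lo x); have := normr_ge0 (up x).
rewrite ler_norml; lra.
Qed.
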